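(* Let $\xi,\xi'\in\mathscr C$ with $D_i^\#(\xi)=\xi$ for every $i\in I$. Then $D_0^\#(\xi\xi')=\xi\,D_0^\#(\xi')$.
   Context: $G$ is a simply connected simple algebraic group over $\mathbb C$ with maximal torus $H$, Weyl group $W$, weight lattice $P$, simple roots $\alpha_i$ and simple reflections $s_i$ ($i\in I$), highest root $\vartheta$ with coroot $\vartheta^\vee$ and reflection $s_\vartheta$, coroot lattice $Q^\vee$ (on which $W$ acts). $\mathbb C(P)$ is the fraction field of the group algebra $\mathbb CP$ (basis $e^\lambda$), with $W$ acting by $w(e^\lambda)=e^{w\lambda}$. $\mathscr C=\mathbb C(P)\otimes\mathbb CQ^\vee$, with basis symbols $t_\beta$, is the commutative algebra with $(f\otimes t_\beta)(g\otimes t_\gamma)=fg\otimes t_{\beta+\gamma}$. The $\mathbb C$-linear operators $D_i^\#$ ($i\in I$) and $D_0^\#$ on $\mathscr C$ are $$D_i^\#(f\otimes t_\beta)=\frac{f}{1-e^{\alpha_i}}\otimes t_\beta-\frac{e^{\alpha_i}s_i(f)}{1-e^{\alpha_i}}\otimes t_{s_i\beta},$$ $$D_0^\#(f\otimes t_\beta)=\frac{f}{1-e^{-\vartheta}}\otimes t_\beta-\frac{e^{-\vartheta}s_\vartheta(f)}{1-e^{-\vartheta}}\otimes t_{s_\vartheta(\beta-\vartheta^\vee)}.$$ *)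

From HB Require Import structures.
From mathcomp Require Import all_boot all_order all_algebra.
Import Order.TTheory GRing.Theory Num.Theory.
From mathcomp Require Import complex.
From mathcomp Require Import Rstruct.
From mathcomp Require Import mpoly.
Set Implicit Arguments. Unset Strict Implicit. Unset Printing Implicit Defensive.
Local Open Scope ring_scope.

Definition CC : numClosedFieldType := complex Rdefinitions.R.

(* Root data of a simply connected simple G of rank n, encoded by its  *)
(* Cartan matrix A, with A i j = <alpha_j, alpha_i^vee>, I = 'I_n.     *)
(* Weights lambda in P are written in the basis of fundamental weights *)
(* (lambda 0 i = <lambda, alpha_i^vee>); coweights beta in Q^vee are    *)
(* written in the basis of simple coroots.                             *)
Definition wt (n : nat) := 'rV[int]_n.
Definition cowt (n : nat) := 'rV[int]_n.

Definition cartan_finite_indec (n : nat) (A : 'M[int]_n) : Prop :=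
  (0 < n)%N /\
  [/\ (forall i, A i i = 2),
      (forall i j, i != j -> A i j <= 0),
      (forall i j, A i j = 0 <-> A j i = 0),
      (exists d : 'I_n -> int,
          [/\ forall i, 0 < d i,
              forall i j, d i * A i j = d j * A j i &
              forall x : 'I_n -> rat, (exists i, x i != 0) ->
                0 < \sum_(i < n) \sum_(j < n) x i * (d i * A i j)%:~R * x j])
    & (forall S : {set 'I_n}, S != set0 -> S != setT ->
          exists i, exists j, [/\ i \in S, j \notin S & A i j != 0])].

Definition alpha n (A : 'M[int]_n) (j : 'I_n) : wt n := \row_i A i j.
Definition alphav n (i : 'I_n) : cowt n := \row_k (k == i)%:Z.

Definition wpair n (l : wt n) (b : cowt n) : int := \sum_(i < n) l 0 i * b 0 i.

Definition refl_wt n (g : wt n) (gv : cowt n) (l : wt n) : wt n :=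
  l - g *~ wpair l gv.
Definition refl_co n (g : wt n) (gv : cowt n) (b : cowt n) : cowt n :=
  b - gv *~ wpair g b.

Definition s_wt n (A : 'M[int]_n) (i : 'I_n) := refl_wt (alpha A i) (alphav i).
Definition s_co n (A : 'M[int]_n) (i : 'I_n) := refl_co (alpha A i) (alphav i).

(* Weyl group elements as words in the simple reflections *)
Definition act_wt n (A : 'M[int]_n) (w : seq 'I_n) (l : wt n) : wt n :=
  foldr (s_wt A) l w.
Definition act_co n (A : 'M[int]_n) (w : seq 'I_n) (b : cowt n) : cowt n :=
  foldr (s_co A) b w.

Definition is_root n (A : 'M[int]_n) (g : wt n) : Prop :=
  exists (w : seq 'I_n) (i : 'I_n), g = act_wt A w (alpha A i).

Definition pos_comb n (A : 'M[int]_n) (g : wt n) : Prop :=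
  exists c : 'I_n -> nat, g = \sum_(j < n) alpha A j *+ c j.

Definition highest_root n (A : 'M[int]_n) (th : wt n) : Prop :=
  is_root A th /\ forall b, is_root A b -> pos_comb A (th - b).

Definition coroot_of n (A : 'M[int]_n) (th : wt n) (thv : cowt n) : Prop :=
  exists (w : seq 'I_n) (i : 'I_n),
    th = act_wt A w (alpha A i) /\ thv = act_co A w (alphav i).

(* C(P): the fraction field of CP = C[x_1^{+-1},...,x_n^{+-1}], i.e.    *)
(* C(x_1,...,x_n), with e^{lambda} = prod_i x_i^{lambda_i}              *)
(* (x_i = e^{varpi_i}).                                                 *)
Definition KP (n : nat) := {fraction {mpoly CC[n]}}.

Definition epow n (l : wt n) : KP n :=
  \prod_(i < n) (tofrac ('X_i : {mpoly CC[n]})) ^ (l 0 i).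

Definition mono_wt n (m : 'X_{1..n}) : wt n := \row_i (m i)%:Z.

(* the field automorphism of C(P) induced by a lattice map g : P -> P,
   e^lambda |-> e^{g lambda}, C-linear *)
Definition polyact n (g : wt n -> wt n) (p : {mpoly CC[n]}) : KP n :=
  \sum_(m <- msupp p) tofrac (p@_m)%:MP * epow (g (mono_wt m)).
Definition fieldact n (g : wt n -> wt n) (f : KP n) : KP n :=
  polyact g (\n_(repr f)) / polyact g (\d_(repr f)).

(* The algebra  C(P) (x) CQ^vee.  An element is represented by a finite *)
(* list of pure tensors (f, beta) standing for sum f (x) t_beta; two     *)
(* lists represent the same element iff their coefficient functions      *)
(* Q^vee -> C(P) agree.                                                  *)
Definition Cspace (n : nat) := seq (KP n * cowt n).

Definition coefCsp n (xi : Cspace n) (b : cowt n) : KP n :=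
  \sum_(p <- xi | p.2 == b) p.1.

Definition eqCsp n (xi xi' : Cspace n) : Prop :=
  forall b, coefCsp xi b = coefCsp xi' b.

Definition mulCsp n (xi xi' : Cspace n) : Cspace n :=
  [seq (p.1 * q.1, p.2 + q.2) | p <- xi, q <- xi'].

Definition Di n (A : 'M[int]_n) (i : 'I_n) (xi : Cspace n) : Cspace n :=
  let ea := epow (alpha A i) in
  flatten [seq [:: (p.1 / (1 - ea), p.2);
                   (- (ea * fieldact (s_wt A i) p.1) / (1 - ea), s_co A i p.2)]
          | p <- xi].

Definition D0 n (th : wt n) (thv : cowt n) (xi : Cspace n) : Cspace n :=
  let e := epow (- th) in
  flatten [seq [:: (p.1 / (1 - e), p.2);
                   (- (e * fieldact (refl_wt th thv) p.1) / (1 - e),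
                    refl_co th thv (p.2 - thv))]
          | p <- xi].

(* Write c(b) for the coefficient of t_b in xi.  Comparing coefficients of t_b,
   D_i^# xi = xi says (c(b) - e^{alpha_i} s_i(c(s_i b))) / (1 - e^{alpha_i}) = c(b),
   i.e. s_i(c(s_i b)) = c(b): the coefficient function is W-equivariant.  As
   th = w alpha_i and thv = w alpha_i^vee, s_th = w s_i w^-1 lies in W, hence
   s_th(c(b)) = c(s_th b).  Now D_0^# maps f (x) t_b to
   (f (x) t_b - e s_th(f) (x) t_{rho b}) / (1 - e) with e = e^{-th} and
   rho(b + b') = s_th b + rho b'; for an operator of this shape the Leibniz rule
   D(xi xi') = xi D(xi') holds as soon as the coefficients of xi are
   equivariant in this sense.  The field automorphism of C(P) induced by a lattice
   automorphism extends the ring map C[P] -> C(P), which is injective since it maps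
   distinct monomials to distinct Laurent monomials. *)

From HB Require Import structures.
From mathcomp Require Import all_boot all_order all_algebra.
Import Order.TTheory GRing.Theory Num.Theory.
From mathcomp Require Import complex Rstruct mpoly.
From mathcomp Require Import zify ring.
Set Implicit Arguments. Unset Strict Implicit. Unset Printing Implicit Defensive.
Local Open Scope ring_scope.
Local Notation "x %:F" := (@tofrac _ x) (at level 1, format "x %:F").

Section Pairing.
Variable n : nat.
Implicit Types (l b g gv : 'rV[int]_n).

Lemma wpairC l b : wpair l b = wpair b l.
Proof. by apply: eq_bigr => i _; rewrite mulrC. Qed.
Lemma wpairBl l l' b : wpair (l - l') b = wpair l b - wpair l' b.
Proof. by rewrite /wpair -sumrB; apply: eq_bigr => i _; rewrite !mxE mulrBl. Qed.
Lemma wpairMzl l z b : wpair (l *~ z) b = wpair l b * z.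
Proof. by rewrite /wpair mulr_suml; apply: eq_bigr => i _; rewrite -scaler_int mxE intz; ring. Qed.
Lemma wpairBr l b b' : wpair l (b - b') = wpair l b - wpair l b'.
Proof. by rewrite wpairC wpairBl !(wpairC l). Qed.
Lemma wpairMzr l b z : wpair l (b *~ z) = wpair l b * z.
Proof. by rewrite wpairC wpairMzl wpairC. Qed.

Lemma refl_wt_is_zmod_morphism g gv : zmod_morphism (refl_wt g gv).
Proof. by move=> l l'; rewrite /refl_wt wpairBl mulrzBr !opprD !opprK [LHS]addrACA. Qed.
HB.instance Definition _ g gv := GRing.isZmodMorphism.Build _ _ (refl_wt g gv)
  (refl_wt_is_zmod_morphism g gv).

Lemma refl_coE g gv : refl_co g gv =1 refl_wt gv g.
Proof. by move=> b; rewrite /refl_co /refl_wt wpairC. Qed.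

Lemma refl_co_is_zmod_morphism g gv : zmod_morphism (refl_co g gv).
Proof. by move=> b b'; rewrite !refl_coE raddfB. Qed.
HB.instance Definition _ g gv := GRing.isZmodMorphism.Build _ _ (refl_co g gv)
  (refl_co_is_zmod_morphism g gv).

Lemma refl_wtK g gv : wpair g gv = 2 -> involutive (refl_wt g gv).
Proof.
move=> E l; rewrite /refl_wt wpairBl wpairMzl E.
have -> : wpair l gv - 2 * wpair l gv = - wpair l gv by ring.
by rewrite mulrNz opprK subrK.
Qed.

Lemma refl_coK g gv : wpair g gv = 2 -> involutive (refl_co g gv).
Proof. by move=> E b; rewrite !refl_coE refl_wtK // wpairC. Qed.

Lemma refl_wpair g gv l b : wpair g gv = 2 ->
  wpair (refl_wt g gv l) (refl_co g gv b) = wpair l b.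
Proof. by move=> E; rewrite /refl_wt /refl_co !(wpairBl, wpairBr, wpairMzl, wpairMzr) E; ring. Qed.
End Pairing.

Lemma foldr_rev_involutive (I T : Type) (r : I -> T -> T) :
  (forall i, involutive (r i)) -> forall w x, foldr r (foldr r x (rev w)) w = x.
Proof.
move=> rK; elim=> //= i w IHw x.
by rewrite rev_cons -cats1 foldr_cat /= IHw rK.
Qed.

Section Weyl.
Variables (n : nat) (A : 'M[int]_n).
Implicit Types (w : seq 'I_n) (l b : 'rV[int]_n).

HB.instance Definition _ i := GRing.isZmodMorphism.Build _ _ (s_wt A i)
  (refl_wt_is_zmod_morphism _ _).

HB.instance Definition _ i := GRing.isZmodMorphism.Build _ _ (s_co A i)
  (refl_co_is_zmod_morphism _ _).

Lemma act_wt_is_zmod_morphism w : zmod_morphism (act_wt A w).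
Proof. by elim: w => [|i w IHw] l l' //=; rewrite IHw raddfB. Qed.
HB.instance Definition _ w := GRing.isZmodMorphism.Build _ _ (act_wt A w)
  (act_wt_is_zmod_morphism w).

Lemma act_co_is_zmod_morphism w : zmod_morphism (act_co A w).
Proof. by elim: w => [|i w IHw] b b' //=; rewrite IHw raddfB. Qed.
HB.instance Definition _ w := GRing.isZmodMorphism.Build _ _ (act_co A w)
  (act_co_is_zmod_morphism w).

Hypothesis A2 : forall i, A i i = 2.

Lemma wpair_alpha i : wpair (alpha A i) (alphav i) = 2.
Proof.
rewrite /wpair (bigD1 i) //= big1 => [|j ji]; rewrite !mxE ?eqxx ?A2 ?mulr1 ?addr0 //.
by rewrite (negbTE ji) mulr0.
Qed.

Lemma s_wtK i : involutive (s_wt A i).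
Proof. exact/refl_wtK/wpair_alpha. Qed.

Lemma s_coK i : involutive (s_co A i).
Proof. exact/refl_coK/wpair_alpha. Qed.

Lemma s_wt_inj i : injective (s_wt A i).
Proof. exact/can_inj/s_wtK. Qed.

Lemma act_wt_revK w l : act_wt A w (act_wt A (rev w) l) = l.
Proof. exact/foldr_rev_involutive/s_wtK. Qed.

Lemma act_co_revK w b : act_co A w (act_co A (rev w) b) = b.
Proof. exact/foldr_rev_involutive/s_coK. Qed.

Lemma wpair_act w l b : wpair (act_wt A w l) (act_co A w b) = wpair l b.
Proof. by elim: w => //= i w IHw; rewrite refl_wpair ?wpair_alpha. Qed.

Lemma refl_wt_conj w i :
  refl_wt (act_wt A w (alpha A i)) (act_co A w (alphav i)) =1
  act_wt A (w ++ i :: rev w).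
Proof.
move=> l; have -> : act_wt A (w ++ i :: rev w) l =
                    act_wt A w (s_wt A i (act_wt A (rev w) l)) by exact: foldr_cat.
rewrite /s_wt /refl_wt raddfB raddfMz /= act_wt_revK.
by congr (_ - _ *~ _); rewrite -{1}(act_wt_revK w l) wpair_act.
Qed.

Lemma refl_co_conj w i :
  refl_co (act_wt A w (alpha A i)) (act_co A w (alphav i)) =1
  act_co A (w ++ i :: rev w).
Proof.
move=> b; have -> : act_co A (w ++ i :: rev w) b =
                    act_co A w (s_co A i (act_co A (rev w) b)) by exact: foldr_cat.
rewrite /s_co /refl_co raddfB raddfMz /= act_co_revK.
by congr (_ - _ *~ _); rewrite -{1}(act_co_revK w b) wpair_act.
Qed.
End Weyl.

Section FracLift.
Variables (R : idomainType) (K : fieldType) (f : {rmorphism R -> K}).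
Hypothesis f_inj : injective f.
Implicit Types (x y : {fraction R}) (a d : R).

Lemma frac_numden x : x = (\n_(repr x))%:F / (\d_(repr x))%:F.
Proof.
have dx_neq0 : (\d_(repr x))%:F != 0 by rewrite tofrac_eq0 denom_ratioP.
apply: (mulIf dx_neq0); rewrite divfK //; rewrite -[x in x * _]reprK.
unlock tofrac; rewrite [_ * _]piE; apply/eqmodP.
by rewrite /= FracField.equivfE /= !numden_Ratio ?mulf_neq0 ?oner_neq0 ?denom_ratioP
  // !mulr1 mulrC.
Qed.

Definition frac_lift x : K := f (\n_(repr x)) / f (\d_(repr x)).

Lemma frac_lift_frac a d : d != 0 -> frac_lift (a%:F / d%:F) = f a / f d.
Proof.
move=> d_neq0; rewrite /frac_lift; set x := a%:F / d%:F.
have dx_neq0 : \d_(repr x) != 0 := denom_ratioP _.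
apply/eqP; rewrite eqr_div ?(raddf_eq0 _ f_inj) // -!rmorphM; apply/eqP; congr (f _).
apply/eqP; rewrite -tofrac_eq !tofracM -eqr_div ?tofrac_eq0 //.
by rewrite -frac_numden.
Qed.

Lemma frac_lift_tofrac a : frac_lift a%:F = f a.
Proof. by rewrite -[a%:F]divr1 -tofrac1 frac_lift_frac ?oner_neq0 // rmorph1 divr1. Qed.

Lemma frac_lift0 : frac_lift 0 = 0.
Proof. by rewrite -tofrac0 frac_lift_tofrac rmorph0. Qed.

Lemma frac_liftD x y : frac_lift (x + y) = frac_lift x + frac_lift y.
Proof.
have d_neq0 (z : {fraction R}) : \d_(repr z) != 0 := denom_ratioP _.
rewrite [x]frac_numden [y]frac_numden addf_div ?tofrac_eq0 // -!tofracM -tofracD.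
rewrite !frac_lift_frac ?mulf_neq0 // rmorphD !rmorphM.
by rewrite addf_div ?(raddf_eq0 _ f_inj).
Qed.

Lemma frac_lift_sum (I : Type) (r : seq I) (F : I -> {fraction R}) :
  frac_lift (\sum_(i <- r) F i) = \sum_(i <- r) frac_lift (F i).
Proof. exact: (big_morph _ frac_liftD frac_lift0). Qed.

Lemma frac_liftM x y : frac_lift (x * y) = frac_lift x * frac_lift y.
Proof.
have d_neq0 (z : {fraction R}) : \d_(repr z) != 0 := denom_ratioP _.
rewrite [x]frac_numden [y]frac_numden mulf_div -!tofracM.
by rewrite !frac_lift_frac ?mulf_neq0 // !rmorphM mulf_div.
Qed.

Lemma frac_liftV x : frac_lift x^-1 = (frac_lift x)^-1.
Proof.
have d_neq0 : \d_(repr x) != 0 := denom_ratioP _.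
rewrite [x]frac_numden; have [->|n_neq0] := eqVneq (\n_(repr x)) 0.
  by rewrite tofrac0 mul0r invr0 frac_lift0 invr0.
by rewrite invf_div !frac_lift_frac // invf_div.
Qed.
End FracLift.

Section LaurentMonomials.
Variable n : nat.
Implicit Types (l : wt n) (m : 'X_{1..n}).

Lemma mpolyX_neq0 m : ('X_[m] : {mpoly CC[n]}) != 0.
Proof. by apply/eqP => /(congr1 (mcoeff m))/eqP; rewrite mcoeffX mcoeff0 eqxx oner_eq0. Qed.

Definition mnm_pos l : 'X_{1..n} := [multinom absz (Num.max (l 0%R i) 0%R) | i < n].
Definition mnm_neg l : 'X_{1..n} := [multinom absz (Num.max (- l 0%R i) 0%R) | i < n].

Lemma mono_wt_posBneg l : l = mono_wt (mnm_pos l) - mono_wt (mnm_neg l).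
Proof. by apply/rowP => i; rewrite !mxE !mnmE !maxEle; do 2 case: ifP; lia. Qed.

Lemma mono_wt_sum (m : 'X_{1..n}) : mono_wt m = \sum_(i < n) mono_wt U_(i) *+ m i.
Proof.
apply/rowP => j; rewrite summxE (bigD1 j) //= big1 => [|i ij]; rewrite mulmxnE !mxE mnm1E.
  by rewrite eqxx addr0 natz.
by rewrite (negbTE ij) mul0rn.
Qed.

Lemma epowD l l' : epow (l + l') = epow l * epow l'.
Proof.
rewrite /epow -big_split /=; apply: eq_bigr => i _.
by rewrite mxE expfzDr // tofrac_eq0 mpolyX_neq0.
Qed.

Lemma epow0 : epow (0 : wt n) = 1.
Proof. by rewrite /epow big1 // => i _; rewrite mxE expr0z. Qed.

Lemma epowMn l k : epow (l *+ k) = epow l ^+ k.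
Proof. by elim: k => [|k IHk]; rewrite ?mulr0n ?epow0 // mulrS epowD IHk exprS. Qed.

Lemma epow_neq0 l : epow l != 0.
Proof.
by apply/prodf_neq0 => i _; rewrite expfz_eq0 tofrac_eq0 (negbTE (mpolyX_neq0 _)) andbF.
Qed.

Lemma epowB l l' : epow (l - l') = epow l / epow l'.
Proof.
apply: (mulIf (epow_neq0 l')); rewrite -epowD subrK divfK //; exact: epow_neq0.
Qed.

Lemma epow_mono_wt m : epow (mono_wt m) = ('X_[m])%:F.
Proof.
by rewrite /epow mpolyXE_id rmorph_prod; apply: eq_bigr => i _; rewrite mxE rmorphXn.
Qed.

Lemma epow_frac l : epow l = ('X_[mnm_pos l])%:F / ('X_[mnm_neg l])%:F.
Proof. by rewrite {1}[l]mono_wt_posBneg epowB !epow_mono_wt. Qed.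
End LaurentMonomials.

Section FieldAction.
Variables (n : nat) (g : {additive wt n -> wt n}).
Hypothesis g_inj : injective g.

Let constF : {rmorphism CC -> KP n} := @tofrac _ \o @mpolyC n CC.
Let epow_g (i : 'I_n) : KP n := epow (g (mono_wt U_(i))).

Lemma epow_act_mono_wt m : epow (g (mono_wt m)) = mmap1 epow_g m.
Proof.
rewrite mono_wt_sum raddf_sum (big_morph _ (@epowD n) (@epow0 n)).
by apply: eq_bigr => i _; rewrite raddfMn epowMn.
Qed.

Lemma polyact_mmap : polyact g =1 mmap constF epow_g.
Proof. by move=> p; apply: eq_bigr => m _; rewrite epow_act_mono_wt. Qed.

Lemma polyactC c : polyact g c%:MP = (c%:MP)%:F.
Proof. by rewrite polyact_mmap mmapC. Qed.

Lemma mmap_epow_inj : injective (mmap constF epow_g).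
Proof.
apply: raddf_inj => p /=; rewrite -polyact_mmap => Pp0; apply/eqP/negPn/negP => p_neq0.
(* Multiplying by e^N clears all denominators; the resulting monomials k m are
   pairwise distinct because g is injective. *)
set S := msupp p.
pose N : 'X_{1..n} := [multinom (\sum_(m <- S) absz (g (mono_wt m) 0%R i))%N | i < n].
pose k (m : 'X_{1..n}) : 'X_{1..n} :=
  [multinom absz ((N i)%:Z + g (mono_wt m) 0%R i)%R | i < n].
have kE m : m \in S -> mono_wt (k m) = mono_wt N + g (mono_wt m).
  move=> mS; apply/rowP => i; rewrite !mxE !mnmE.
  have : (absz (g (mono_wt m) 0%R i) <= \sum_(m' <- S) absz (g (mono_wt m') 0%R i))%N.
    by rewrite (bigD1_seq m) ?msupp_uniq //= leq_addr.
  lia.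
have k_inj : {in S &, injective k}.
  move=> m1 m2 m1S m2S /(congr1 (@mono_wt n)); rewrite !kE // => /addrI /g_inj.
  by move/rowP => E; apply/mnmP => i; move: (E i); rewrite !mxE => -[].
have : (\sum_(m <- S) p@_m *: 'X_[k m])%:F = epow (mono_wt N) * polyact g p.
  rewrite /polyact mulr_sumr rmorph_sum; apply: eq_big_seq => m mS.
  by rewrite mulrCA -epowD -kE // epow_mono_wt -mul_mpolyC rmorphM.
rewrite Pp0 mulr0 => /eqP; rewrite tofrac_eq0 => /eqP /(congr1 (mcoeff (k (mlead p)))).
have lead_S : mlead p \in S by exact: mlead_supp.
rewrite mcoeff0 raddf_sum (bigD1_seq (mlead p)) ?msupp_uniq //= big1_seq.
  by rewrite mcoeffZ mcoeffX eqxx mulr1 addr0 => /eqP; rewrite mleadc_eq0 (negbTE p_neq0).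
move=> m /andP [m_lead mS]; rewrite mcoeffZ mcoeffX.
case: eqP => [E|_]; last by rewrite mulr0.
by rewrite (k_inj _ _ mS lead_S E) eqxx in m_lead.
Qed.

Lemma fieldactE : fieldact g =1 frac_lift (mmap constF epow_g).
Proof. by move=> x; rewrite /fieldact !polyact_mmap. Qed.

Lemma fieldact_tofrac p : fieldact g p%:F = polyact g p.
Proof. by rewrite fieldactE (frac_lift_tofrac mmap_epow_inj) polyact_mmap. Qed.

Lemma fieldact0 : fieldact g 0 = 0.
Proof. by rewrite fieldactE (frac_lift0 mmap_epow_inj). Qed.

Lemma fieldact_sum (I : Type) (r : seq I) (F : I -> KP n) :
  fieldact g (\sum_(i <- r) F i) = \sum_(i <- r) fieldact g (F i).
Proof.
rewrite fieldactE (frac_lift_sum mmap_epow_inj).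
by apply: eq_bigr => i _; rewrite fieldactE.
Qed.

Lemma fieldactM x y : fieldact g (x * y) = fieldact g x * fieldact g y.
Proof. by rewrite !fieldactE (frac_liftM mmap_epow_inj). Qed.

Lemma fieldactV x : fieldact g x^-1 = (fieldact g x)^-1.
Proof. by rewrite !fieldactE (frac_liftV mmap_epow_inj). Qed.

Lemma fieldact_epow l : fieldact g (epow l) = epow (g l).
Proof.
rewrite epow_frac fieldactE (frac_lift_frac mmap_epow_inj) ?mpolyX_neq0 //.
by rewrite /= !mmapX -!epow_act_mono_wt -epowB -raddfB -mono_wt_posBneg.
Qed.
End FieldAction.

Lemma fieldact_ext n (g g' : wt n -> wt n) : g =1 g' -> fieldact g =1 fieldact g'.
Proof. by move=> E x; rewrite /fieldact /polyact; congr (_ / _); apply: eq_bigr => m _; rewrite E. Qed.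

Lemma fieldact_comp n (g h : {additive wt n -> wt n}) x :
  injective g -> fieldact g (fieldact h x) = fieldact (g \o h) x.
Proof.
move=> g_inj.
have polyact_comp p : fieldact g (polyact h p) = polyact (g \o h) p.
  rewrite (fieldact_sum g_inj); apply: eq_bigr => m _.
  by rewrite (fieldactM g_inj) (fieldact_tofrac g_inj) (fieldact_epow g_inj) polyactC.
by rewrite (fieldactM g_inj) (fieldactV g_inj) !polyact_comp.
Qed.

Lemma fieldact_id n (x : KP n) : fieldact idfun x = x.
Proof.
have polyact_id p : polyact idfun p = p%:F.
  rewrite {2}(mpolyE p) rmorph_sum; apply: eq_bigr => m _.
  by rewrite epow_mono_wt -rmorphM mul_mpolyC.
by rewrite /fieldact !polyact_id -frac_numden.
Qed.

Lemma act_wt_equivariant n (A : 'M[int]_n) (c : cowt n -> KP n) :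
  (forall i, A i i = 2) ->
  (forall i b, fieldact (s_wt A i) (c b) = c (s_co A i b)) ->
  forall w b, fieldact (act_wt A w) (c b) = c (act_co A w b).
Proof.
move=> A2 s_equiv; elim=> [|i w IHw] b; first by rewrite (@fieldact_ext _ _ idfun) ?fieldact_id.
rewrite (@fieldact_ext _ _ (s_wt A i \o act_wt A w)) // -fieldact_comp /= ?IHw ?s_equiv //.
exact: s_wt_inj.
Qed.

Section DemazureOperators.
Variable n : nat.
Implicit Types (xi : Cspace n) (b : cowt n) (e : KP n).

(* [Di A i] and [D0 th thv] are, by conversion, the instances
   (e, g, rho) = (e^{alpha_i}, s_i, s_i) and (e^{-th}, s_th, fun b => s_th (b - thv)). *)
Definition Dsharp e (g : wt n -> wt n) (rho : cowt n -> cowt n) xi : Cspace n :=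
  flatten [seq [:: (p.1 / (1 - e), p.2); (- (e * fieldact g p.1) / (1 - e), rho p.2)]
          | p <- xi].

Lemma big_Dsharp e g rho xi (F : KP n * cowt n -> KP n) :
  \sum_(q <- Dsharp e g rho xi) F q =
  \sum_(q <- xi) (F (q.1 / (1 - e), q.2) + F (- (e * fieldact g q.1) / (1 - e), rho q.2)).
Proof. by rewrite big_flatten big_map; apply: eq_bigr => q _; rewrite big_cons big_seq1. Qed.

Lemma coefCspE xi b : coefCsp xi b = \sum_(p <- xi) (if p.2 == b then p.1 else 0).
Proof. exact: big_mkcond. Qed.

Lemma coefCsp_mul xi xi' b :
  coefCsp (mulCsp xi xi') b = \sum_(q <- xi') coefCsp xi (b - q.2) * q.1.
Proof.
rewrite coefCspE big_allpairs_dep exchange_big; apply: eq_bigr => q _.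
rewrite coefCspE mulr_suml; apply: eq_bigr => p _ /=.
by rewrite [p.2 == _]eq_sym subr_eq eq_sym; case: eqP; rewrite ?mul0r.
Qed.

Variables (g : {additive wt n -> wt n}) (rho rho' : cowt n -> cowt n).
Hypotheses (g_inj : injective g) (rhoK : cancel rho rho') (rhoK' : cancel rho' rho).

Lemma coefCsp_Dsharp e xi b :
  coefCsp (Dsharp e g rho xi) b =
  (coefCsp xi b - e * fieldact g (coefCsp xi (rho' b))) / (1 - e).
Proof.
rewrite coefCspE big_Dsharp big_split /= !coefCspE (fieldact_sum g_inj).
rewrite mulrBl mulr_sumr !mulr_suml -sumrN; congr (_ + _); apply: eq_bigr => p _.
  by case: eqP; rewrite ?mul0r.
rewrite (can2_eq rhoK rhoK'); case: eqP => _; last by rewrite (fieldact0 g_inj) mulr0 mul0r oppr0.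
by rewrite mulNr.
Qed.

Lemma Dsharp_fixed_equivariant e xi : e != 0 -> eqCsp (Dsharp e g rho xi) xi ->
  forall b, fieldact g (coefCsp xi (rho' b)) = coefCsp xi b.
Proof.
move=> e_neq0 fixed b; have [e1|e1_neq0] := eqVneq (1 - e) 0.
  (* Division by 1 - e = 0 returns 0, so then every coefficient of xi vanishes. *)
  have c0 b' : coefCsp xi b' = 0 by rewrite -fixed coefCsp_Dsharp e1 invr0 mulr0.
  by rewrite !c0 (fieldact0 g_inj).
have := fixed b; rewrite coefCsp_Dsharp => /(congr1 ( *%R^~ (1 - e))); rewrite divfK // => E.
apply: (mulfI e_neq0); transitivity (coefCsp xi b - coefCsp xi b * (1 - e)); last by ring.
by rewrite -E; ring.
Qed.

Lemma Dsharp_mul_equivariant e (sigma : cowt n -> cowt n) xi xi' :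
  (forall b b', rho (b + b') = sigma b + rho b') ->
  (forall b, fieldact g (coefCsp xi b) = coefCsp xi (sigma b)) ->
  eqCsp (Dsharp e g rho (mulCsp xi xi')) (mulCsp xi (Dsharp e g rho xi')).
Proof.
move=> rho_affine xi_equiv b.
have shift q : sigma (rho' b - q) = b - rho q.
  by apply/eqP; rewrite eq_sym subr_eq -rho_affine subrK rhoK'.
rewrite coefCsp_Dsharp !coefCsp_mul big_Dsharp (fieldact_sum g_inj).
have -> : \sum_(q <- xi') fieldact g (coefCsp xi (rho' b - q.2) * q.1) =
          \sum_(q <- xi') coefCsp xi (b - rho q.2) * fieldact g q.1.
  by apply: eq_bigr => q _; rewrite (fieldactM g_inj) xi_equiv shift.
rewrite mulr_sumr -sumrB mulr_suml; apply: eq_bigr => q _ /=; ring.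
Qed.
End DemazureOperators.

Theorem lemma2p6 (n : nat) (A : 'M[int]_n) (th : wt n) (thv : cowt n)
    (xi xi' : Cspace n) :
  cartan_finite_indec A -> highest_root A th -> coroot_of A th thv ->
  (forall i : 'I_n, eqCsp (Di A i xi) xi) ->
  eqCsp (D0 th thv (mulCsp xi xi')) (mulCsp xi (D0 th thv xi')).
Proof.
move=> [_ [A2 _ _ _ _]] _ [w [i [Eth Ethv]]] Di_xi.
have th_thv : wpair th thv = 2 by rewrite Eth Ethv wpair_act ?wpair_alpha.
have s_equiv j b : fieldact (s_wt A j) (coefCsp xi b) = coefCsp xi (s_co A j b).
  rewrite -[b in LHS](s_coK A2 j).
  exact: (Dsharp_fixed_equivariant (s_wt_inj A2 (i := j)) (s_coK A2 j) (s_coK A2 j)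
           (epow_neq0 (alpha A j)) (Di_xi j)).
have refl_equiv b : fieldact (refl_wt th thv) (coefCsp xi b) = coefCsp xi (refl_co th thv b).
  rewrite Eth Ethv (fieldact_ext (refl_wt_conj A2 w i)) refl_co_conj //.
  exact: act_wt_equivariant.
apply: (Dsharp_mul_equivariant (g := refl_wt th thv) (rho := fun b => refl_co th thv (b - thv))
         (rho' := fun b => refl_co th thv b + thv)) refl_equiv.
- exact/can_inj/refl_wtK.
- by move=> b; rewrite refl_coK ?subrK.
- by move=> b; rewrite addrK refl_coK.
- by move=> b b'; rewrite -addrA raddfD.
Qed.
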